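(* Let $l>0$, $D>0$, and let $r\in C^2([0,\infty))$ satisfy $r>0$, $r'<0$ on $[0,\infty)$ and $\lim_{v\to\infty}r(v)=0$. For $j\ge0$ put $\lambda_j=(\pi j/l)^2$ and $\sigma_j=-\big[\frac{r'(1)}{1+D\lambda_j}+r(1)\big]\lambda_j$; assume there is an integer $i^c\ge1$ with $\sigma_i>0$ for $1\le i\le i^c$ and $\sigma_i\le0$ for $i>i^c$, and let $\sigma_c=\frac1D(\sqrt{-r'(1)}-\sqrt{r(1)})^2$. For $\sigma\in(0,\sigma_c)$ set $$f_0(\sigma)=-\frac{r'(1)}{Dr(1)}-\frac{\sigma}{r(1)}\ (>0),\qquad f_1=\frac{r'(1)}{Dr(1)},\qquad g_0=\frac1D,\qquad g_1=-\frac1D,$$ let $X=\{(u,v):u,v\in C^2([0,l]),\ u'=v'=0\text{ at }x=0,l\}$, let $F_\sigma$ be the inverse of $f_0(\sigma)-\frac{d^2}{dx^2}$ and $F$ the inverse of $-g_1-\frac{d^2}{dx^2}$ (both with homogeneous Neumann boundary conditions on $(0,l)$), and define the linear operator $M(\sigma)$ on $X$ by $$M(\sigma)(\tilde u,\tilde v)=\big(2f_0(\sigma)F_\sigma(\tilde u)+f_1F_\sigma(\tilde v),\ g_0F(\tilde u)\big).$$ Let $j$ be a positive integer with $\lambda_j<-\frac{r'(1)+r(1)}{Dr(1)}$ and $\sigma_j\ne\sigma_k$ for all integers $k\ne j$, and assume $\sigma_j\in(0,\sigma_c)$. Then $1$ is an eigenvalue of $M(\sigma_j)$ with algebraic multiplicity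 one.
   Context: $M(\sigma)$ is the linear part of the fixed-point reformulation $\tilde\omega=M(\sigma)\tilde\omega+H(\sigma,\tilde\omega)$ of the Neumann steady-state problem $(r(v)u)''+\sigma u(1-u)=0$, $Dv''-v+u=0$ on $(0,l)$ after shifting $(u,v)=(1+\tilde u,1+\tilde v)$. *)

From Stdlib Require Import Reals Lra ClassicalEpsilon.
From Coquelicot Require Import Coquelicot.
Open Scope R_scope.

Definition has_deriv_within (S : R -> Prop) (f f' : R -> R) : Prop :=
  forall x, S x ->
    filterlim (fun h => (f (x + h) - f x) / h)
      (within (fun h => h <> 0 /\ S (x + h)) (locally 0))
      (locally (f' x)).

Definition cont_within (S : R -> Prop) (f : R -> R) : Prop :=
  forall x, S x -> filterlim f (within S (locally x)) (locally (f x)).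

Definition Icc (l : R) : R -> Prop := fun x => 0 <= x <= l.
Definition Ici0 : R -> Prop := fun x => 0 <= x.

Definition C2_neumann (l : R) (u : R -> R) : Prop :=
  exists u1 u2, has_deriv_within (Icc l) u u1 /\ has_deriv_within (Icc l) u1 u2 /\
    cont_within (Icc l) u2 /\ u1 0 = 0 /\ u1 l = 0.

(* The space X = {(u,v) : u, v in C^2([0,l]), u' = v' = 0 at 0, l};
   elements are identified when they agree on [0,l]. *)
Definition inX (l : R) (p : (R -> R) * (R -> R)) : Prop :=
  C2_neumann l (fst p) /\ C2_neumann l (snd p).

Definition eqI (l : R) (f g : R -> R) : Prop := forall x, Icc l x -> f x = g x.
Definition eqX (l : R) (p q : (R -> R) * (R -> R)) : Prop :=
  eqI l (fst p) (fst q) /\ eqI l (snd p) (snd q).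

Definition is_resolvent (l a : R) (w z : R -> R) : Prop :=
  exists z1 z2, has_deriv_within (Icc l) z z1 /\ has_deriv_within (Icc l) z1 z2 /\
    cont_within (Icc l) z2 /\ z1 0 = 0 /\ z1 l = 0 /\
    (forall x, Icc l x -> a * z x - z2 x = w x).

(* (a - d^2/dx^2)^{-1} w with Neumann conditions (chosen solution). *)
Definition resolvent (l a : R) (w : R -> R) : R -> R :=
  epsilon (inhabits (fun _ : R => 0)) (fun z => is_resolvent l a w z).

Definition lam (l : R) (j : nat) : R := (PI * INR j / l) ^ 2.

(* sigma_j, with r1 = r(1), dr1 = r'(1) *)
Definition sigma_k (l D r1 dr1 : R) (j : nat) : R :=
  - (dr1 / (1 + D * lam l j) + r1) * lam l j.

Definition sigma_c (D r1 dr1 : R) : R := / D * (sqrt (- dr1) - sqrt r1) ^ 2.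

Definition f0 (D r1 dr1 sigma : R) : R := - dr1 / (D * r1) - sigma / r1.
Definition f1 (D r1 dr1 : R) : R := dr1 / (D * r1).
Definition g0 (D : R) : R := / D.
Definition g1 (D : R) : R := - / D.

Definition Mop (l D r1 dr1 sigma : R) (p : (R -> R) * (R -> R)) : (R -> R) * (R -> R) :=
  let a := f0 D r1 dr1 sigma in
  (fun x => 2 * a * resolvent l a (fst p) x + f1 D r1 dr1 * resolvent l a (snd p) x,
   fun x => g0 D * resolvent l (- g1 D) (fst p) x).

Definition MmI (l D r1 dr1 sigma : R) (p : (R -> R) * (R -> R)) : (R -> R) * (R -> R) :=
  let q := Mop l D r1 dr1 sigma p in
  (fun x => fst q x - fst p x, fun x => snd q x - snd p x).

Definition zeroX : (R -> R) * (R -> R) := (fun _ => 0, fun _ => 0).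
Definition scaleX (c : R) (p : (R -> R) * (R -> R)) : (R -> R) * (R -> R) :=
  (fun x => c * fst p x, fun x => c * snd p x).

(* 1 is an eigenvalue of M(sigma) on X with algebraic multiplicity one:
   there is an eigenvector phi, and the generalized eigenspace
   U_k ker (M - I)^k is spanned by phi. *)
Definition eigval1_alg_mult_one (l D r1 dr1 sigma : R) : Prop :=
  exists phi, inX l phi /\ ~ eqX l phi zeroX /\
    eqX l (Mop l D r1 dr1 sigma phi) phi /\
    (forall (k : nat) psi, inX l psi ->
       eqX l (Nat.iter k (MmI l D r1 dr1 sigma) psi) zeroX ->
       exists c : R, eqX l psi (scaleX c phi)).

(* The eigenvector is phi = (cos (omega_j x), cos (omega_j x) / (1 + D lam_j)):
   the value sigma = sigma_j is exactly what makes it a fixed point of M.  By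
   induction on k it then suffices to show that (M - I) psi = c phi forces c = 0
   and psi in span phi.  Applying the resolvents' defining ODEs turns
   (M - I) psi = c phi into a 2x2 linear Neumann system for psi = (u, v) forced
   by c cos (omega_j x).  Its coefficient matrix has eigenvalues -lam_j and
   1/D - f0 + lam_j.  On the first mode the forcing is resonant, so c = 0 and
   that mode is a multiple of cos (omega_j x); the second mode vanishes because
   1/D - f0 + lam_j is no Neumann eigenvalue -lam_n: for n <> j this is
   sigma_j <> sigma_n, and for n = j it is sigma_j <> sigma_c. *)

From Stdlib Require Import Reals Lra Lia ZArith ClassicalEpsilon.
From Coquelicot Require Import Coquelicot.
Open Scope R_scope.

Lemma locally_R_iff (x : R) (P : R -> Prop) :
  locally x P <-> exists d, 0 < d /\ forall y, Rabs (y - x) < d -> P y.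
Proof.
  split.
  - intros [d Hd]. exists d. split; [apply cond_pos | exact Hd].
  - intros [d [Hd H]]. exists (mkposreal d Hd). exact H.
Qed.

Lemma has_deriv_within_iff (S : R -> Prop) f f' :
  has_deriv_within S f f' <->
  forall x, S x -> forall eps, 0 < eps -> exists d, 0 < d /\
    forall h, h <> 0 -> S (x + h) -> Rabs h < d ->
      Rabs ((f (x + h) - f x) / h - f' x) < eps.
Proof.
  split.
  - intros H x Sx eps He.
    specialize (H x Sx). apply filterlim_locally with (eps := mkposreal eps He) in H.
    apply locally_R_iff in H. destruct H as [d [Hd H]].
    exists d; split; [exact Hd|]. intros h h0 Sh hd.
    apply (H h); [rewrite Rminus_0_r; exact hd | split; assumption].
  - intros H x Sx. apply filterlim_locally. intros [eps He].
    destruct (H x Sx eps He) as [d [Hd H']]. apply locally_R_iff.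
    exists d; split; [exact Hd|]. intros h hd [h0 Sh].
    apply H'; auto. rewrite Rminus_0_r in hd; exact hd.
Qed.

Lemma has_deriv_within_of_is_derive (S : R -> Prop) f f' :
  (forall x, S x -> is_derive f x (f' x)) -> has_deriv_within S f f'.
Proof.
  intros H. apply has_deriv_within_iff. intros x Sx eps He.
  specialize (H x Sx). apply is_derive_Reals in H.
  destruct (H eps He) as [d Hd]. exists d. split; [apply cond_pos|].
  intros h h0 _ hd. apply Hd; assumption.
Qed.

Lemma is_derive_of_has_deriv_within_Icc l f f' x :
  has_deriv_within (Icc l) f f' -> 0 < x < l -> is_derive f x (f' x).
Proof.
  intros H Hx. apply is_derive_Reals. intros eps He.
  rewrite has_deriv_within_iff in H.
  destruct (H x ltac:(unfold Icc; lra) eps He) as [d [Hd H']].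
  assert (Hm : 0 < Rmin d (Rmin x (l - x))) by (repeat apply Rmin_pos; lra).
  exists (mkposreal _ Hm). simpl. intros h h0 hd.
  pose proof (Rmin_l d (Rmin x (l - x))). pose proof (Rmin_r d (Rmin x (l - x))).
  pose proof (Rmin_l x (l - x)). pose proof (Rmin_r x (l - x)).
  apply Rabs_lt_between in hd as hd'.
  apply H'; [exact h0 | unfold Icc; lra | lra].
Qed.

Lemma has_deriv_within_cont S f f' : has_deriv_within S f f' -> cont_within S f.
Proof.
  intros H x Sx. rewrite has_deriv_within_iff in H.
  destruct (H x Sx 1 Rlt_0_1) as [d [Hd H']].
  apply filterlim_locally. intros [eps He]. apply locally_R_iff.
  set (K := Rabs (f' x) + 1).
  assert (HK : 0 < K) by (unfold K; pose proof (Rabs_pos (f' x)); lra).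
  exists (Rmin d (eps / K)). split.
  { apply Rmin_pos; [lra | apply Rdiv_lt_0_compat; lra]. }
  intros y Hy Sy. change (Rabs (f y - f x) < eps).
  destruct (Req_dec y x) as [->|Hyx].
  { rewrite Rminus_eq_0, Rabs_R0. exact He. }
  pose proof (Rmin_l d (eps / K)). pose proof (Rmin_r d (eps / K)).
  replace y with (x + (y - x)) in Sy |- * by ring.
  specialize (H' (y - x) ltac:(lra) Sy ltac:(lra)).
  assert (Hq : Rabs ((f (x + (y - x)) - f x) / (y - x)) < K).
  { unfold K. pose proof (Rabs_triang_inv ((f (x + (y - x)) - f x) / (y - x)) (f' x)). lra. }
  replace (f (x + (y - x)) - f x) with ((y - x) * ((f (x + (y - x)) - f x) / (y - x)))
    by (field; lra).
  rewrite Rabs_mult.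
  apply Rle_lt_trans with (Rabs (y - x) * K).
  - apply Rmult_le_compat_l; [apply Rabs_pos | lra].
  - apply Rmult_lt_reg_r with (/ K); [apply Rinv_0_lt_compat; lra|].
    rewrite Rmult_assoc, Rinv_r, Rmult_1_r by lra. unfold Rdiv in *. lra.
Qed.

Lemma has_deriv_within_lin S f f' g g' (a b : R) :
  has_deriv_within S f f' -> has_deriv_within S g g' ->
  has_deriv_within S (fun x => a * f x + b * g x) (fun x => a * f' x + b * g' x).
Proof.
  intros Hf Hg x Sx.
  eapply filterlim_ext.
  2: { eapply filterlim_comp_2.
       - eapply filterlim_comp; [exact (Hf x Sx) | apply (filterlim_scal_r a (f' x))].
       - eapply filterlim_comp; [exact (Hg x Sx) | apply (filterlim_scal_r b (g' x))].
       - exact (filterlim_plus (K := R_AbsRing) (V := R_NormedModule) (a * f' x) (b * g' x)). }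
  intros h. simpl. unfold plus, scal; simpl. unfold mult; simpl. unfold Rdiv. ring.
Qed.

Lemma has_deriv_within_ext_in (S : R -> Prop) f f' g g' :
  (forall x, S x -> f x = g x) -> (forall x, S x -> f' x = g' x) ->
  has_deriv_within S f f' -> has_deriv_within S g g'.
Proof.
  intros E E' H x Sx. rewrite <- (E' x Sx).
  apply filterlim_within_ext with (fun h => (f (x + h) - f x) / h); [|exact (H x Sx)].
  intros h [_ Sh]. now rewrite (E _ Sh), (E _ Sx).
Qed.

Lemma cont_within_of_continuity (S : R -> Prop) f :
  (forall x, continuity_pt f x) -> cont_within S f.
Proof.
  intros H x _. eapply filterlim_filter_le_1; [apply filter_le_within|].
  apply continuity_pt_filterlim, H.
Qed.

Lemma cont_within_of_ex_derive (S : R -> Prop) f :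
  (forall x, ex_derive f x) -> cont_within S f.
Proof.
  intros H. apply cont_within_of_continuity. intro x.
  apply continuity_pt_filterlim. exact (ex_derive_continuous f x (H x)).
Qed.

Lemma cont_within_plus S f g :
  cont_within S f -> cont_within S g -> cont_within S (fun x => f x + g x).
Proof.
  intros Hf Hg x Sx. eapply filterlim_comp_2; [exact (Hf x Sx) | exact (Hg x Sx)|].
  exact (filterlim_plus (K := R_AbsRing) (V := R_NormedModule) (f x) (g x)).
Qed.

Lemma cont_within_mult S f g :
  cont_within S f -> cont_within S g -> cont_within S (fun x => f x * g x).
Proof.
  intros Hf Hg x Sx. eapply filterlim_comp_2; [exact (Hf x Sx) | exact (Hg x Sx)|].
  exact (filterlim_mult (K := R_AbsRing) (f x) (g x)).
Qed.

Lemma cont_within_lin S f g (a b : R) :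
  cont_within S f -> cont_within S g -> cont_within S (fun x => a * f x + b * g x).
Proof.
  intros Hf Hg.
  assert (Hc : forall c : R, cont_within S (fun _ => c)).
  { intros c x _. apply filterlim_const. }
  apply (cont_within_plus S (fun x => a * f x) (fun x => b * g x));
    apply (cont_within_mult S (fun _ => _)); auto.
Qed.

(* Extends a function on [0, l] to R, by constants outside, so that the
   continuity-based results MVT_gen and RInt apply. *)
Definition clamp (l x : R) : R := Rmax 0 (Rmin x l).

Lemma clamp_Icc l x : 0 <= l -> Icc l (clamp l x).
Proof. intros; unfold clamp, Icc, Rmax, Rmin; repeat destruct Rle_dec; lra. Qed.

Lemma clamp_id l x : Icc l x -> clamp l x = x.
Proof. unfold clamp, Icc, Rmax, Rmin; intros; repeat destruct Rle_dec; lra. Qed.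

Lemma clamp_lipschitz l x t : 0 <= l -> Rabs (clamp l t - clamp l x) <= Rabs (t - x).
Proof.
  intros. unfold clamp, Rmax, Rmin; repeat destruct Rle_dec;
  unfold Rabs; repeat destruct Rcase_abs; lra.
Qed.

Lemma continuity_pt_clamp l f : 0 <= l -> cont_within (Icc l) f ->
  forall x, continuity_pt (fun t => f (clamp l t)) x.
Proof.
  intros hl Hf x. apply continuity_pt_filterlim.
  eapply filterlim_comp; [| apply Hf, clamp_Icc, hl].
  intros P HP. apply locally_R_iff in HP. destruct HP as [d [Hd HP]].
  apply locally_R_iff. exists d. split; [exact Hd|].
  intros t Ht. apply HP; [pose proof (clamp_lipschitz l x t hl); lra | apply clamp_Icc, hl].
Qed.

Lemma Icc_le_of_derive_nonpos l h dh : 0 < l -> cont_within (Icc l) h ->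
  (forall x, 0 < x < l -> is_derive h x (dh x)) -> (forall x, Icc l x -> dh x <= 0) ->
  forall x, Icc l x -> h x <= h 0.
Proof.
  intros hl Hc Hd Hneg x Hx. unfold Icc in Hx.
  destruct (Req_dec x 0) as [->|Hx0]; [lra|].
  destruct (MVT_gen (fun t => h (clamp l t)) 0 x dh) as [c [Hc' E]].
  - rewrite Rmin_left, Rmax_right by lra. intros t Ht.
    apply is_derive_ext_loc with h; [|apply Hd; lra].
    apply locally_R_iff. exists (Rmin t (l - t)). split; [apply Rmin_pos; lra|].
    intros s Hs. apply Rabs_lt_between in Hs.
    pose proof (Rmin_l t (l - t)). pose proof (Rmin_r t (l - t)).
    rewrite clamp_id; [reflexivity | unfold Icc; lra].
  - intros t _. apply continuity_pt_clamp; [lra | exact Hc].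
  - rewrite Rmin_left, Rmax_right in Hc' by lra.
    rewrite !clamp_id in E by (unfold Icc; lra).
    assert (dh c <= 0) by (apply Hneg; unfold Icc; lra).
    nra.
Qed.

Lemma Rmult_2_le_Rabs_sqr (p A B : R) : 2 * p * (A * B) <= Rabs p * (A * A + B * B).
Proof.
  unfold Rabs; destruct Rcase_abs.
  - assert (0 <= - p * ((A + B) * (A + B))) by (apply Rmult_le_pos; [lra | apply Rle_0_sqr]).
    nra.
  - assert (0 <= p * ((A - B) * (A - B))) by (apply Rmult_le_pos; [lra | apply Rle_0_sqr]).
    nra.
Qed.

(* The energy (y^2 + y'^2) e^(-|1+k| x) is nonincreasing and vanishes at 0. *)
Lemma ode2_Icc_zero l y y1 y2 k : 0 < l ->
  has_deriv_within (Icc l) y y1 -> has_deriv_within (Icc l) y1 y2 ->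
  (forall x, Icc l x -> y2 x = k * y x) -> y 0 = 0 -> y1 0 = 0 ->
  forall x, Icc l x -> y x = 0 /\ y1 x = 0.
Proof.
  intros hl Hy Hy1 Hk H0 H10.
  set (C := Rabs (1 + k)).
  set (E := fun x => (y x * y x + y1 x * y1 x) * exp (- C * x)).
  set (dE := fun x =>
    (2 * y x * y1 x + 2 * y1 x * y2 x - C * (y x * y x + y1 x * y1 x)) * exp (- C * x)).
  assert (HdE : forall x, Icc l x -> dE x <= 0).
  { intros x Hx. unfold dE. rewrite (Hk x Hx).
    pose proof (exp_pos (- C * x)) as Hexp.
    pose proof (Rmult_2_le_Rabs_sqr (1 + k) (y x) (y1 x)) as Hyy. fold C in Hyy.
    apply Rmult_le_0_r; [lra | exact (Rlt_le _ _ Hexp)]. }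
  assert (Hder : forall x, 0 < x < l -> is_derive E x (dE x)).
  { intros x Hx.
    pose proof (is_derive_of_has_deriv_within_Icc _ _ _ _ Hy Hx).
    pose proof (is_derive_of_has_deriv_within_Icc _ _ _ _ Hy1 Hx).
    unfold E, dE. auto_derive; [repeat split; eexists; eauto|].
    replace (Derive (fun t => y t) x) with (y1 x) by (symmetry; now apply is_derive_unique).
    replace (Derive (fun t => y1 t) x) with (y2 x) by (symmetry; now apply is_derive_unique).
    ring. }
  assert (Hcont : cont_within (Icc l) E).
  { pose proof (has_deriv_within_cont _ _ _ Hy). pose proof (has_deriv_within_cont _ _ _ Hy1).
    apply cont_within_mult; [apply cont_within_plus; apply cont_within_mult; assumption|].
    apply cont_within_of_ex_derive. intro x. auto_derive. exact I. }
  intros x Hx.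
  pose proof (Icc_le_of_derive_nonpos l E dE hl Hcont Hder HdE x Hx) as Hle.
  unfold E in Hle. rewrite H0, H10, !Rmult_0_l in Hle.
  assert (0 < exp (- C * x)) by apply exp_pos.
  assert (y x * y x + y1 x * y1 x <= 0) by nra.
  split; nra.
Qed.

Lemma ode2_Icc_unique l y y1 y2 g g1 g2 k : 0 < l ->
  has_deriv_within (Icc l) y y1 -> has_deriv_within (Icc l) y1 y2 ->
  has_deriv_within (Icc l) g g1 -> has_deriv_within (Icc l) g1 g2 ->
  (forall x, Icc l x -> y2 x - g2 x = k * (y x - g x)) ->
  y 0 = g 0 -> y1 0 = g1 0 ->
  forall x, Icc l x -> y x = g x /\ y1 x = g1 x.
Proof.
  intros hl Hy Hy1 Hg Hg1 Hk H0 H1 x Hx.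
  destruct (ode2_Icc_zero l _ _ _ k hl (has_deriv_within_lin _ _ _ _ _ 1 (-1) Hy Hg)
              (has_deriv_within_lin _ _ _ _ _ 1 (-1) Hy1 Hg1)) with (x := x); auto.
  - intros t Ht. transitivity (y2 t - g2 t); [ring|]. rewrite (Hk t Ht). ring.
  - rewrite H0; ring.
  - rewrite H1; ring.
  - split; lra.
Qed.

Lemma ode2_cos_solution l y y1 y2 w : 0 < l ->
  has_deriv_within (Icc l) y y1 -> has_deriv_within (Icc l) y1 y2 ->
  (forall x, Icc l x -> y2 x = - (w * w) * y x) -> y1 0 = 0 ->
  forall x, Icc l x -> y x = y 0 * cos (w * x) /\ y1 x = - y 0 * w * sin (w * x).
Proof.
  intros hl Hy Hy1 Hk H10.
  apply (ode2_Icc_unique l y y1 y2 _ _ (fun x => - y 0 * w * w * cos (w * x)) (- (w * w)));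
    auto.
  - apply has_deriv_within_of_is_derive. intros x _. auto_derive; auto. ring.
  - apply has_deriv_within_of_is_derive. intros x _. auto_derive; auto. ring.
  - intros x Hx. rewrite Hk by exact Hx. ring.
  - rewrite Rmult_0_r, cos_0; ring.
  - rewrite Rmult_0_r, sin_0, H10; ring.
Qed.

Lemma ode2_cosh_solution l y y1 y2 m : 0 < l ->
  has_deriv_within (Icc l) y y1 -> has_deriv_within (Icc l) y1 y2 ->
  (forall x, Icc l x -> y2 x = m * m * y x) -> y1 0 = 0 ->
  forall x, Icc l x -> y x = y 0 * (exp (m * x) + exp (- m * x)) / 2 /\
                       y1 x = y 0 * m * (exp (m * x) - exp (- m * x)) / 2.
Proof.
  intros hl Hy Hy1 Hk H10.
  apply (ode2_Icc_unique l y y1 y2 _ _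
           (fun x => y 0 * m * m * (exp (m * x) + exp (- m * x)) / 2) (m * m)); auto.
  - apply has_deriv_within_of_is_derive. intros x _. auto_derive; auto. field.
  - apply has_deriv_within_of_is_derive. intros x _. auto_derive; auto. field.
  - intros x Hx. rewrite Hk by exact Hx. field.
  - rewrite !Rmult_0_r, exp_0; field.
  - rewrite !Rmult_0_r, exp_0, H10; field.
Qed.

Definition omega (l : R) (j : nat) : R := PI * INR j / l.

Lemma omega_sqr l j : omega l j * omega l j = lam l j.
Proof. unfold omega, lam. ring. Qed.

Lemma lam_nonneg l j : 0 <= lam l j.
Proof. apply pow2_ge_0. Qed.

Lemma lam_pos l j : 0 < l -> (1 <= j)%nat -> 0 < lam l j.
Proof.
  intros hl hj. unfold lam. apply pow_lt, Rdiv_lt_0_compat; [|exact hl].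
  apply Rmult_lt_0_compat; [exact PI_RGT_0 | apply lt_0_INR; lia].
Qed.

Lemma omega_l l j : 0 < l -> omega l j * l = PI * INR j.
Proof. intros hl. unfold omega. field. lra. Qed.

Lemma sin_omega_l l j : 0 < l -> sin (omega l j * l) = 0.
Proof.
  intros hl. rewrite omega_l by exact hl.
  apply sin_eq_0_1. exists (Z.of_nat j). rewrite <- INR_IZR_INZ. ring.
Qed.

Lemma cos_omega_l_neq_0 l j : 0 < l -> cos (omega l j * l) <> 0.
Proof.
  intros hl Hc. pose proof (sin2_cos2 (omega l j * l)) as E.
  rewrite sin_omega_l, Hc in E by exact hl. unfold Rsqr in E. lra.
Qed.

Lemma sin_eq_0_lam l w : 0 < l -> 0 < w -> sin (w * l) = 0 -> exists n, w * w = lam l n.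
Proof.
  intros hl hw Hs. destruct (sin_eq_0_0 _ Hs) as [z Hz].
  assert (Hz0 : (0 <= z)%Z).
  { apply le_IZR. pose proof PI_RGT_0. assert (0 < w * l) by (apply Rmult_lt_0_compat; lra).
    nra. }
  exists (Z.to_nat z). unfold lam. rewrite INR_IZR_INZ, Z2Nat.id by exact Hz0.
  replace (PI * IZR z) with (w * l) by (rewrite Hz; ring). field. lra.
Qed.

Definition neumann2 (l : R) (y y1 y2 : R -> R) : Prop :=
  has_deriv_within (Icc l) y y1 /\ has_deriv_within (Icc l) y1 y2 /\ y1 0 = 0 /\ y1 l = 0.

Lemma neumann2_lin l y y1 y2 z z1 z2 (p q : R) :
  neumann2 l y y1 y2 -> neumann2 l z z1 z2 ->
  neumann2 l (fun x => p * y x + q * z x) (fun x => p * y1 x + q * z1 x)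
    (fun x => p * y2 x + q * z2 x).
Proof.
  intros [Dy [Dy1 [Y0 Yl]]] [Dz [Dz1 [Z0 Zl]]].
  split; [|split]; [apply has_deriv_within_lin; assumption ..|].
  rewrite Y0, Z0, Yl, Zl. split; ring.
Qed.

Lemma neumann2_ext_in l y y1 y2 z z1 z2 : 0 < l ->
  (forall x, Icc l x -> y x = z x) -> (forall x, Icc l x -> y1 x = z1 x) ->
  (forall x, Icc l x -> y2 x = z2 x) -> neumann2 l y y1 y2 -> neumann2 l z z1 z2.
Proof.
  intros hl E E1 E2 [Dy [Dy1 [Y0 Yl]]].
  assert (Icc l 0 /\ Icc l l) as [I0 Il] by (unfold Icc; lra).
  split; [|split; [|split]].
  - exact (has_deriv_within_ext_in _ _ _ _ _ E E1 Dy).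
  - exact (has_deriv_within_ext_in _ _ _ _ _ E1 E2 Dy1).
  - rewrite <- E1 by exact I0. exact Y0.
  - rewrite <- E1 by exact Il. exact Yl.
Qed.

Lemma neumann2_scal l y y1 y2 (p : R) : 0 < l -> neumann2 l y y1 y2 ->
  neumann2 l (fun x => p * y x) (fun x => p * y1 x) (fun x => p * y2 x).
Proof.
  intros hl H.
  refine (neumann2_ext_in l _ _ _ _ _ _ hl _ _ _ (neumann2_lin l _ _ _ _ _ _ p 0 H H));
    intros x _; ring.
Qed.

Lemma neumann2_cos l j : 0 < l ->
  neumann2 l (fun x => cos (omega l j * x)) (fun x => - omega l j * sin (omega l j * x))
    (fun x => - lam l j * cos (omega l j * x)).
Proof.
  intros hl. rewrite <- omega_sqr.
  split; [|split; [|split]].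
  - apply has_deriv_within_of_is_derive. intros x _. auto_derive; auto. ring.
  - apply has_deriv_within_of_is_derive. intros x _. auto_derive; auto. ring.
  - rewrite Rmult_0_r, sin_0. ring.
  - rewrite sin_omega_l by exact hl. ring.
Qed.

Lemma neumann2_zero_of_not_eigen l y y1 y2 k : 0 < l ->
  neumann2 l y y1 y2 -> (forall x, Icc l x -> y2 x = k * y x) ->
  (forall n, k <> - lam l n) ->
  forall x, Icc l x -> y x = 0.
Proof.
  intros hl [Dy [Dy1 [Y0 Yl]]] Hk Hn.
  assert (Hl : Icc l l) by (unfold Icc; lra).
  destruct (Rtotal_order k 0) as [Hneg|[Hz|Hpos]].
  - set (w := sqrt (- k)).
    assert (Hw : 0 < w) by (apply sqrt_lt_R0; lra).
    assert (Hw2 : w * w = - k) by (apply sqrt_sqrt; lra).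
    assert (Hsol := ode2_cos_solution l y y1 y2 w hl Dy Dy1
                      ltac:(intros x Hx; rewrite Hw2, Ropp_involutive; exact (Hk x Hx)) Y0).
    destruct (Req_dec (y 0) 0) as [HA|HA].
    { intros x Hx. destruct (Hsol x Hx) as [-> _]. rewrite HA. ring. }
    exfalso. destruct (Hsol l Hl) as [_ El]. rewrite Yl in El.
    destruct (sin_eq_0_lam l w hl Hw) as [n Hn'].
    + apply Rmult_eq_reg_l with (- y 0 * w); [lra|].
      intro Hc. apply HA. nra.
    + apply (Hn n). lra.
  - exfalso. apply (Hn 0%nat). unfold lam. rewrite Hz. simpl. field. lra.
  - set (m := sqrt k).
    assert (Hm : 0 < m) by (apply sqrt_lt_R0; lra).
    assert (Hm2 : m * m = k) by (apply sqrt_sqrt; lra).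
    assert (Hsol := ode2_cosh_solution l y y1 y2 m hl Dy Dy1
                      ltac:(intros x Hx; rewrite Hm2; exact (Hk x Hx)) Y0).
    destruct (Hsol l Hl) as [_ El]. rewrite Yl in El.
    assert (exp (- m * l) < exp (m * l)).
    { apply exp_increasing. assert (0 < m * l) by (apply Rmult_lt_0_compat; lra). lra. }
    assert (HA : y 0 = 0).
    { assert (E : y 0 * (m * (exp (m * l) - exp (- m * l))) = 0) by lra.
      apply Rmult_integral in E. destruct E as [E|E]; [exact E|].
      apply Rmult_integral in E. lra. }
    intros x Hx. destruct (Hsol x Hx) as [-> _]. rewrite HA. field.
Qed.

(* A forcing term C cos(omega_j x) resonates with the Neumann mode j: the
   solution of the initial value problem, y(0) cos + C x sin / (2 omega_j),
   has y'(l) = C l cos(j pi) / 2. *)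
Lemma neumann2_resonance l y y1 y2 (j : nat) C : 0 < l -> (1 <= j)%nat ->
  neumann2 l y y1 y2 ->
  (forall x, Icc l x -> y2 x = - lam l j * y x + C * cos (omega l j * x)) ->
  C = 0.
Proof.
  intros hl hj [Dy [Dy1 [Y0 Yl]]] Hk.
  set (w := omega l j) in *. set (A := y 0).
  assert (Hw : 0 < w).
  { unfold w, omega. apply Rdiv_lt_0_compat; [|exact hl].
    apply Rmult_lt_0_compat; [exact PI_RGT_0 | apply lt_0_INR; lia]. }
  destruct (ode2_Icc_unique l y y1 y2
     (fun x => C * x * sin (w * x) / (2 * w) + A * cos (w * x))
     (fun x => C * (sin (w * x) + w * x * cos (w * x)) / (2 * w) - A * w * sin (w * x))
     (fun x => C * cos (w * x) - w * w * (C * x * sin (w * x) / (2 * w) + A * cos (w * x)))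
     (- lam l j) hl Dy Dy1) with (x := l) as [_ El].
  - apply has_deriv_within_of_is_derive. intros x _. auto_derive; auto. field. lra.
  - apply has_deriv_within_of_is_derive. intros x _. auto_derive; auto. field. lra.
  - intros x Hx. rewrite Hk by exact Hx. rewrite <- omega_sqr. fold w. ring.
  - cbv beta. rewrite !Rmult_0_r, cos_0, sin_0. unfold A. field. lra.
  - cbv beta. rewrite !Rmult_0_r, cos_0, sin_0, Y0. field. lra.
  - unfold Icc; lra.
  - unfold w in El. rewrite Yl, sin_omega_l in El by exact hl. fold w in El.
    pose proof (cos_omega_l_neq_0 l j hl) as Hcos. fold w in Hcos.
    assert (E : C * (w * l * cos (w * l)) = 0).
    { apply Rmult_eq_reg_r with (/ (2 * w)); [|apply Rinv_neq_0_compat; lra].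
      rewrite Rmult_0_l, El. field. lra. }
    apply Rmult_integral in E. destruct E as [E|E]; [exact E|].
    apply Rmult_integral in E. destruct E as [E|E]; [nra | contradiction].
Qed.

Lemma is_derive_RInt_0 (g : R -> R) x : (forall t, continuity_pt g t) ->
  is_derive (fun b => RInt g 0 b) x (g x).
Proof.
  intros Hg. apply (is_derive_RInt g (fun b => RInt g 0 b) 0 x).
  - apply filter_forall. intro b. apply (RInt_correct (V := R_CompleteNormedModule)).
    apply (ex_RInt_continuous (V := R_CompleteNormedModule)).
    intros z _. apply continuity_pt_filterlim, Hg.
  - apply continuity_pt_filterlim, Hg.
Qed.

(* Variation of constants with the fundamental solutions e^(m x), e^(-m x). *)
Lemma ode2_particular_solution m w : 0 < m -> (forall x, continuity_pt w x) ->
  exists z z1, (forall x, is_derive z x (z1 x)) /\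
    (forall x, is_derive z1 x (m * m * z x - w x)) /\ z1 0 = 0.
Proof.
  intros hm Hw.
  set (Jm := fun x => RInt (fun s => exp (- m * s) * w s) 0 x).
  set (Jp := fun x => RInt (fun s => exp (m * s) * w s) 0 x).
  assert (DJm : forall x, is_derive Jm x (exp (- m * x) * w x)).
  { intro x. apply (is_derive_RInt_0 (fun s => exp (- m * s) * w s)). intro t.
    apply continuity_pt_mult; [apply derivable_continuous_pt; auto_derive; auto|apply Hw]. }
  assert (DJp : forall x, is_derive Jp x (exp (m * x) * w x)).
  { intro x. apply (is_derive_RInt_0 (fun s => exp (m * s) * w s)). intro t.
    apply continuity_pt_mult; [apply derivable_continuous_pt; auto_derive; auto|apply Hw]. }
  exists (fun x => (exp (- m * x) * Jp x - exp (m * x) * Jm x) / (2 * m)),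
         (fun x => - (exp (m * x) * Jm x + exp (- m * x) * Jp x) / 2).
  assert (Einv : forall x, exp (- m * x) = / exp (m * x)).
  { intro x. rewrite <- exp_Ropp. f_equal. ring. }
  assert (Epos : forall x, exp (m * x) <> 0) by (intro x; apply Rgt_not_eq, exp_pos).
  split; [|split].
  - intro x. auto_derive; [repeat split; eexists; eauto|].
    rewrite (is_derive_unique (fun t : R => Jm t) _ _ (DJm x)),
      (is_derive_unique (fun t : R => Jp t) _ _ (DJp x)), Einv.
    field. split; [exact (Epos x) | lra].
  - intro x. auto_derive; [repeat split; eexists; eauto|].
    rewrite (is_derive_unique (fun t : R => Jm t) _ _ (DJm x)),
      (is_derive_unique (fun t : R => Jp t) _ _ (DJp x)), Einv.
    field. split; [exact (Epos x) | lra].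
  - unfold Jm, Jp. rewrite !RInt_point. unfold zero; simpl. field.
Qed.

(* The particular solution is corrected by a multiple of cosh (m x), whose
   derivative m sinh (m l) does not vanish at x = l. *)
Lemma is_resolvent_exists_continuous l a w : 0 < l -> 0 < a ->
  (forall x, continuity_pt w x) -> exists z, is_resolvent l a w z.
Proof.
  intros hl ha Hw.
  set (m := sqrt a).
  assert (Hm : 0 < m) by (apply sqrt_lt_R0; lra).
  assert (Hm2 : m * m = a) by (apply sqrt_sqrt; lra).
  destruct (ode2_particular_solution m w Hm Hw) as [zp [zp1 [Dzp [Dzp1 Zp0]]]].
  set (s := exp (m * l) - exp (- m * l)).
  assert (Hs : 0 < s).
  { assert (0 < m * l) by (apply Rmult_lt_0_compat; lra).
    assert (exp (- m * l) < exp (m * l)) by (apply exp_increasing; lra).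
    unfold s. lra. }
  set (c := - zp1 l / (m * s)).
  set (z := fun x => zp x + c * (exp (m * x) + exp (- m * x))).
  set (z1 := fun x => zp1 x + c * m * (exp (m * x) - exp (- m * x))).
  assert (Dz : forall x, is_derive z x (z1 x)).
  { intro x. unfold z, z1. auto_derive; [repeat split; eexists; eauto|].
    rewrite (is_derive_unique (fun t : R => zp t) _ _ (Dzp x)). ring. }
  assert (Dz1 : forall x, is_derive z1 x (a * z x - w x)).
  { intro x. unfold z, z1. auto_derive; [repeat split; eexists; eauto|].
    rewrite (is_derive_unique (fun t : R => zp1 t) _ _ (Dzp1 x)), <- Hm2. ring. }
  exists z, z1, (fun x => a * z x - w x).
  split; [|split; [|split; [|split; [|split]]]].
  - apply has_deriv_within_of_is_derive. intros x _. apply Dz.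
  - apply has_deriv_within_of_is_derive. intros x _. apply Dz1.
  - apply cont_within_of_continuity. intro x.
    apply continuity_pt_minus; [|apply Hw].
    apply continuity_pt_mult; [apply continuity_pt_const; intros ? ?; reflexivity|].
    apply continuity_pt_filterlim, (ex_derive_continuous z). exists (z1 x). apply Dz.
  - unfold z1. rewrite Zp0, !Rmult_0_r, exp_0. ring.
  - unfold z1, c. fold s. field. lra.
  - intros x _. ring.
Qed.

Lemma is_resolvent_ext_in l a w w' z :
  (forall x, Icc l x -> w x = w' x) -> is_resolvent l a w z -> is_resolvent l a w' z.
Proof.
  intros E [z1 [z2 [D1 [D2 [C [H0 [Hl Hz]]]]]]].
  exists z1, z2. repeat split; try assumption.
  intros x Hx. rewrite <- E by exact Hx. exact (Hz x Hx).
Qed.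

Lemma is_resolvent_exists l a w : 0 < l -> 0 < a -> cont_within (Icc l) w ->
  exists z, is_resolvent l a w z.
Proof.
  intros hl ha Hw.
  destruct (is_resolvent_exists_continuous l a (fun t => w (clamp l t)) hl ha)
    as [z Hz]; [apply continuity_pt_clamp; [lra | exact Hw]|].
  exists z. apply (is_resolvent_ext_in l a (fun t => w (clamp l t)) w z); [|exact Hz].
  intros x Hx. now rewrite clamp_id.
Qed.

Lemma resolvent_spec l a w : 0 < l -> 0 < a -> cont_within (Icc l) w ->
  is_resolvent l a w (resolvent l a w).
Proof.
  intros hl ha hw. unfold resolvent. apply epsilon_spec.
  exact (is_resolvent_exists l a w hl ha hw).
Qed.

Lemma resolvent_neumann2 l a w : 0 < l -> 0 < a -> cont_within (Icc l) w ->
  exists z1 z2, neumann2 l (resolvent l a w) z1 z2 /\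
    forall x, Icc l x -> z2 x = a * resolvent l a w x - w x.
Proof.
  intros hl ha hw.
  destruct (resolvent_spec l a w hl ha hw) as [z1 [z2 [D1 [D2 [_ [H0 [Hl E]]]]]]].
  exists z1, z2. split; [repeat split; assumption|].
  intros x Hx. rewrite <- (E x Hx). ring.
Qed.

Lemma is_resolvent_unique l a w z z' : 0 < l -> 0 < a ->
  is_resolvent l a w z -> is_resolvent l a w z' -> eqI l z z'.
Proof.
  intros hl ha [z1 [z2 [D1 [D2 [_ [H0 [Hl Hz]]]]]]]
    [z1' [z2' [D1' [D2' [_ [H0' [Hl' Hz']]]]]]] x Hx.
  enough (1 * z x + -1 * z' x = 0) by lra.
  apply (neumann2_zero_of_not_eigen l (fun t => 1 * z t + -1 * z' t)
           (fun t => 1 * z1 t + -1 * z1' t) (fun t => 1 * z2 t + -1 * z2' t) a hl);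
    [| | intros n; pose proof (lam_nonneg l n); lra | exact Hx].
  - apply neumann2_lin; repeat split; assumption.
  - intros t Ht. specialize (Hz t Ht). specialize (Hz' t Ht). lra.
Qed.

Lemma resolvent_eqI l a w z : 0 < l -> 0 < a -> cont_within (Icc l) w ->
  is_resolvent l a w z -> eqI l (resolvent l a w) z.
Proof.
  intros hl ha hw. apply is_resolvent_unique; [exact hl | exact ha |].
  exact (resolvent_spec l a w hl ha hw).
Qed.

Lemma is_resolvent_cos l a (j : nat) k : 0 < l -> 0 < a ->
  is_resolvent l a (fun x => k * cos (omega l j * x))
    (fun x => k / (a + lam l j) * cos (omega l j * x)).
Proof.
  intros hl ha. pose proof (lam_nonneg l j).
  destruct (neumann2_scal l _ _ _ (k / (a + lam l j)) hl (neumann2_cos l j hl))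
    as [D1 [D2 [H0 Hl]]].
  exists (fun x => k / (a + lam l j) * (- omega l j * sin (omega l j * x))),
         (fun x => k / (a + lam l j) * (- lam l j * cos (omega l j * x))).
  split; [|split; [|split; [|split; [|split]]]]; try assumption.
  - apply cont_within_of_ex_derive. intro x. auto_derive. exact I.
  - intros x _. field. lra.
Qed.

Lemma C2_neumann_iff l u :
  C2_neumann l u <-> exists u1 u2, neumann2 l u u1 u2 /\ cont_within (Icc l) u2.
Proof. unfold C2_neumann, neumann2. split; intros [u1 [u2 H]]; exists u1, u2; tauto. Qed.

Lemma C2_neumann_cont l u : C2_neumann l u -> cont_within (Icc l) u.
Proof. intros [u1 [u2 [D1 _]]]. exact (has_deriv_within_cont _ _ _ D1). Qed.

Lemma C2_neumann_lin l f g (p q : R) : C2_neumann l f -> C2_neumann l g ->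
  C2_neumann l (fun x => p * f x + q * g x).
Proof.
  rewrite !C2_neumann_iff. intros [f1 [f2 [Nf Cf]]] [g1 [g2 [Ng Cg]]].
  do 2 eexists. split; [apply (neumann2_lin l _ _ _ _ _ _ p q Nf Ng) |].
  apply cont_within_lin; assumption.
Qed.

Lemma C2_neumann_ext l f g : 0 < l -> (forall x, f x = g x) ->
  C2_neumann l f -> C2_neumann l g.
Proof.
  rewrite !C2_neumann_iff. intros hl E [f1 [f2 [Nf Cf]]]. exists f1, f2. split; [|exact Cf].
  exact (neumann2_ext_in l _ _ _ _ _ _ hl (fun x _ => E x) (fun _ _ => eq_refl)
           (fun _ _ => eq_refl) Nf).
Qed.

Lemma C2_neumann_resolvent l a w : 0 < l -> 0 < a -> cont_within (Icc l) w ->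
  C2_neumann l (resolvent l a w).
Proof.
  intros hl ha hw.
  destruct (resolvent_spec l a w hl ha hw) as [z1 [z2 [D1 [D2 [C [H0 [Hl _]]]]]]].
  exists z1, z2. repeat split; assumption.
Qed.

Lemma C2_neumann_cos l j k : 0 < l -> C2_neumann l (fun x => k * cos (omega l j * x)).
Proof.
  intros hl. apply C2_neumann_iff.
  eexists _, _. split; [exact (neumann2_scal l _ _ _ k hl (neumann2_cos l j hl))|].
  apply cont_within_of_ex_derive. intro x. auto_derive. exact I.
Qed.

Lemma MmI_inX l D r1 dr1 s psi : 0 < l -> 0 < D -> 0 < f0 D r1 dr1 s ->
  inX l psi -> inX l (MmI l D r1 dr1 s psi).
Proof.
  intros hl hD ha [Hu Hv]. destruct psi as [u v]. simpl in *.
  assert (Hb : 0 < - g1 D) by (unfold g1; rewrite Ropp_involutive; apply Rinv_0_lt_compat, hD).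
  pose proof (C2_neumann_cont _ _ Hu). pose proof (C2_neumann_cont _ _ Hv).
  split; simpl.
  - apply (C2_neumann_ext l
      (fun x => 1 * (2 * f0 D r1 dr1 s * resolvent l (f0 D r1 dr1 s) u x +
                     f1 D r1 dr1 * resolvent l (f0 D r1 dr1 s) v x) + (-1) * u x));
      [exact hl | intro; unfold Mop; simpl; ring |].
    apply C2_neumann_lin; [apply C2_neumann_lin|]; auto; apply C2_neumann_resolvent; auto.
  - apply (C2_neumann_ext l (fun x => g0 D * resolvent l (- g1 D) u x + (-1) * v x));
      [exact hl | intro; unfold Mop; simpl; ring |].
    apply C2_neumann_lin; auto. apply C2_neumann_resolvent; auto.
Qed.

Definition phi (l D : R) (j : nat) : (R -> R) * (R -> R) :=
  (fun x => cos (omega l j * x), fun x => / (1 + D * lam l j) * cos (omega l j * x)).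

Lemma phi_inX l D j : 0 < l -> inX l (phi l D j).
Proof.
  intros hl. split; simpl; [|apply C2_neumann_cos, hl].
  apply (C2_neumann_ext l (fun x => 1 * cos (omega l j * x))); [exact hl | intro; ring |].
  apply C2_neumann_cos, hl.
Qed.

Lemma phi_neq_0 l D j : 0 < l -> ~ eqX l (phi l D j) zeroX.
Proof.
  intros hl [E _]. specialize (E 0 ltac:(unfold Icc; lra)). simpl in E.
  rewrite Rmult_0_r, cos_0 in E. lra.
Qed.

Lemma Mop_phi l D r1 dr1 s j : 0 < l -> 0 < D -> 0 < f0 D r1 dr1 s ->
  (f0 D r1 dr1 s - lam l j) * (/ D + lam l j) + / D * f1 D r1 dr1 = 0 ->
  eqX l (Mop l D r1 dr1 s (phi l D j)) (phi l D j).
Proof.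
  intros hl hD ha Hrel.
  set (a := f0 D r1 dr1 s) in *.
  pose proof (lam_nonneg l j).
  assert (Hb : 0 < - g1 D) by (unfold g1; rewrite Ropp_involutive; apply Rinv_0_lt_compat, hD).
  destruct (phi_inX l D j hl) as [C1 C2].
  apply C2_neumann_cont in C1, C2. simpl in C1, C2.
  assert (Ecos : forall x, Icc l x -> 1 * cos (omega l j * x) = cos (omega l j * x))
    by (intros; ring).
  pose proof (resolvent_eqI l a _ _ hl ha C1
                (is_resolvent_ext_in l a _ _ _ Ecos (is_resolvent_cos l a j 1 hl ha))) as R1.
  pose proof (resolvent_eqI l a _ _ hl ha C2 (is_resolvent_cos l a j _ hl ha)) as R2.
  pose proof (resolvent_eqI l _ _ _ hl Hb C1
                (is_resolvent_ext_in l _ _ _ _ Ecos (is_resolvent_cos l _ j 1 hl Hb))) as R3.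
  assert (Hf1 : f1 D r1 dr1 = - (a - lam l j) * (1 + D * lam l j)).
  { apply Rmult_eq_reg_l with (/ D); [|apply Rinv_neq_0_compat; lra].
    transitivity (- ((a - lam l j) * (/ D + lam l j))); [lra | field; lra]. }
  unfold Mop, phi, g0, g1 in *. fold a.
  split; intros x Hx; simpl; [rewrite (R1 x Hx), (R2 x Hx), Hf1 | rewrite (R3 x Hx)];
    field; nra.
Qed.

Lemma MmI_eq_scale_phi_neumann2 l D r1 dr1 s j c u v :
  0 < l -> 0 < D -> 0 < f0 D r1 dr1 s -> inX l (u, v) ->
  eqX l (MmI l D r1 dr1 s (u, v)) (scaleX c (phi l D j)) ->
  exists u1 u2 v1 v2, neumann2 l u u1 u2 /\ neumann2 l v v1 v2 /\
    forall x, Icc l x ->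
      u2 x = - f0 D r1 dr1 s * u x - f1 D r1 dr1 * v x
             + c * (f0 D r1 dr1 s + lam l j) * cos (omega l j * x) /\
      v2 x = / D * (v x - u x) + c * / D * cos (omega l j * x).
Proof.
  intros hl hD ha [Hu Hv] [E1 E2].
  unfold MmI, Mop, scaleX, phi, g0, g1 in E1, E2. simpl in E1, E2. cbv beta in E1, E2.
  rewrite Ropp_involutive in E2.
  set (a := f0 D r1 dr1 s) in *. set (f := f1 D r1 dr1) in *.
  set (beta := / (1 + D * lam l j)) in *.
  assert (Hb : 0 < / D) by (apply Rinv_0_lt_compat, hD).
  apply C2_neumann_cont in Hu, Hv. simpl in Hu, Hv.
  destruct (resolvent_neumann2 l a u hl ha Hu) as [zu1 [zu2 [Nu Zu]]].
  destruct (resolvent_neumann2 l a v hl ha Hv) as [zv1 [zv2 [Nv Zv]]].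
  destruct (resolvent_neumann2 l (/ D) u hl Hb Hu) as [zb1 [zb2 [Nb Zb]]].
  pose proof (neumann2_lin l _ _ _ _ _ _ 1 (- c) (neumann2_lin l _ _ _ _ _ _ (2 * a) f Nu Nv)
                (neumann2_cos l j hl)) as NU.
  pose proof (neumann2_lin l _ _ _ _ _ _ (/ D) (- c * beta) Nb (neumann2_cos l j hl)) as NV.
  eexists _, _, _, _. split; [|split].
  - refine (neumann2_ext_in l _ _ _ _ _ _ hl _ (fun _ _ => eq_refl) (fun _ _ => eq_refl) NU).
    intros x Hx. specialize (E1 x Hx). lra.
  - refine (neumann2_ext_in l _ _ _ _ _ _ hl _ (fun _ _ => eq_refl) (fun _ _ => eq_refl) NV).
    intros x Hx. specialize (E2 x Hx). lra.
  - intros x Hx. specialize (E1 x Hx). specialize (E2 x Hx).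
    cbv beta. rewrite (Zu x Hx), (Zv x Hx), (Zb x Hx). split.
    + transitivity (a * (2 * a * resolvent l a u x + f * resolvent l a v x - u x)
                    - a * u x - f * v x + c * lam l j * cos (omega l j * x)); [ring|].
      rewrite E1. ring.
    + transitivity (/ D * (/ D * resolvent l (/ D) u x - v x) + / D * (v x - u x)
                    + c * beta * lam l j * cos (omega l j * x)); [ring|].
      rewrite E2. unfold beta. pose proof (lam_nonneg l j). field. split; nra.
Qed.

(* Since b f = - (a - lam_j) (b + lam_j), the combination (b + lam_j) u + f v
   solves a scalar problem with eigenvalue -lam_j, where the forcing resonates,
   and (a - lam_j) u + f v one with eigenvalue b - a + lam_j. *)
Section ForcedSystem.

Variables (l a b f c : R) (j : nat) (u u1 u2 v v1 v2 : R -> R).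
Hypotheses (hl : 0 < l) (hj : (1 <= j)%nat) (hb : 0 < b)
  (Hrel : (a - lam l j) * (b + lam l j) + b * f = 0)
  (Nu : neumann2 l u u1 u2) (Nv : neumann2 l v v1 v2)
  (Hsys : forall x, Icc l x ->
     u2 x = - a * u x - f * v x + c * (a + lam l j) * cos (omega l j * x) /\
     v2 x = b * (v x - u x) + c * b * cos (omega l j * x)).

Lemma neumann2_system_forcing_eq_0 : c = 0.
Proof.
  pose proof (lam_pos l j hl hj).
  enough (E : c * (2 * lam l j * (b + lam l j)) = 0).
  { apply Rmult_integral in E. destruct E as [E|E]; [exact E | nra]. }
  apply (neumann2_resonance l _ _ _ j _ hl hj
           (neumann2_lin l _ _ _ _ _ _ (b + lam l j) f Nu Nv)).
  intros x Hx. destruct (Hsys x Hx) as [-> ->].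
  transitivity (- lam l j * ((b + lam l j) * u x + f * v x)
                + c * (2 * lam l j * (b + lam l j)) * cos (omega l j * x)
                + (c * cos (omega l j * x) - u x) * ((a - lam l j) * (b + lam l j) + b * f));
    [ring|].
  rewrite Hrel. ring.
Qed.

Lemma neumann2_system_span : f <> 0 -> (forall n, b - a + lam l j <> - lam l n) ->
  exists c', forall x, Icc l x ->
    u x = c' * cos (omega l j * x) /\
    v x = c' * (b / (b + lam l j)) * cos (omega l j * x).
Proof.
  intros hf Hnr. pose proof (lam_pos l j hl hj). pose proof neumann2_system_forcing_eq_0 as Hc.
  assert (HZ : forall x, Icc l x -> (a - lam l j) * u x + f * v x = 0).
  { apply (neumann2_zero_of_not_eigen l (fun x => (a - lam l j) * u x + f * v x) _ _
             (b - a + lam l j) hl (neumann2_lin l _ _ _ _ _ _ (a - lam l j) f Nu Nv));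
      [|exact Hnr].
    intros x Hx. destruct (Hsys x Hx) as [-> ->]. rewrite Hc.
    transitivity ((b - a + lam l j) * ((a - lam l j) * u x + f * v x)
                  - u x * ((a - lam l j) * (b + lam l j) + b * f)); [ring|].
    rewrite Hrel. ring. }
  assert (HY : forall x, Icc l x ->
    (b + lam l j) * u x + f * v x = ((b + lam l j) * u 0 + f * v 0) * cos (omega l j * x)).
  { destruct (neumann2_lin l _ _ _ _ _ _ (b + lam l j) f Nu Nv) as [DY [DY1 [Y0 _]]].
    refine (fun x Hx => proj1 (ode2_cos_solution l _ _ _ (omega l j) hl DY DY1 _ Y0 x Hx)).
    intros t Ht. rewrite omega_sqr. destruct (Hsys t Ht) as [-> ->]. rewrite Hc.
    transitivity (- lam l j * ((b + lam l j) * u t + f * v t)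
                  - u t * ((a - lam l j) * (b + lam l j) + b * f)); [ring|].
    rewrite Hrel. ring. }
  assert (Hd : b - a + 2 * lam l j <> 0) by (specialize (Hnr j); lra).
  exists (((b + lam l j) * u 0 + f * v 0) / (b - a + 2 * lam l j)).
  intros x Hx. specialize (HY x Hx). specialize (HZ x Hx).
  assert (Hux : u x = ((b + lam l j) * u 0 + f * v 0) / (b - a + 2 * lam l j)
                      * cos (omega l j * x)).
  { apply Rmult_eq_reg_l with (b - a + 2 * lam l j); [|exact Hd].
    transitivity ((b + lam l j) * u x + f * v x - ((a - lam l j) * u x + f * v x)); [ring|].
    rewrite HY, HZ. field. exact Hd. }
  split; [exact Hux|].
  apply Rmult_eq_reg_l with f; [|exact hf].
  transitivity (- (a - lam l j) * u x); [lra|].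
  replace (a - lam l j) with (- (b * f) / (b + lam l j)) by (field_simplify_eq; lra).
  rewrite Hux. field. lra.
Qed.

End ForcedSystem.

Lemma MmI_iter_eq_0_span l D r1 dr1 s j : 0 < l -> 0 < D -> (1 <= j)%nat ->
  0 < f0 D r1 dr1 s -> f1 D r1 dr1 <> 0 ->
  (f0 D r1 dr1 s - lam l j) * (/ D + lam l j) + / D * f1 D r1 dr1 = 0 ->
  (forall n, / D - f0 D r1 dr1 s + lam l j <> - lam l n) ->
  forall k psi, inX l psi -> eqX l (Nat.iter k (MmI l D r1 dr1 s) psi) zeroX ->
  exists c, eqX l psi (scaleX c (phi l D j)).
Proof.
  intros hl hD hj ha hf Hrel Hnr k. induction k as [|k IHk]; intros psi Hpsi Hit.
  - exists 0. destruct Hit as [E1 E2]. simpl in E1, E2.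
    split; intros x Hx; simpl; [rewrite E1 | rewrite E2]; trivial; ring.
  - rewrite Nat.iter_succ_r in Hit.
    destruct (IHk _ (MmI_inX l D r1 dr1 s psi hl hD ha Hpsi) Hit) as [c Hc].
    destruct psi as [u v].
    destruct (MmI_eq_scale_phi_neumann2 l D r1 dr1 s j c u v hl hD ha Hpsi Hc)
      as [u1 [u2 [v1 [v2 [Nu [Nv Hsys]]]]]].
    assert (hb : 0 < / D) by (apply Rinv_0_lt_compat, hD).
    destruct (neumann2_system_span l _ _ _ c j u u1 u2 v v1 v2 hl hj hb Hrel Nu Nv Hsys hf Hnr)
      as [c' Hc'].
    exists c'. pose proof (lam_nonneg l j).
    split; intros x Hx; simpl; destruct (Hc' x Hx) as [Eu Ev];
      [rewrite Eu; ring | rewrite Ev; field; nra].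
Qed.

Section Spectrum.

Variables (l D r1 dr1 : R) (j : nat).
Hypotheses (hD : 0 < D) (hr1 : 0 < r1) (hdr1 : dr1 < 0).

Let hDlam (n : nat) : 0 < 1 + D * lam l n.
Proof. pose proof (lam_nonneg l n). nra. Qed.

Lemma f0_sigma_k :
  f0 D r1 dr1 (sigma_k l D r1 dr1 j) = lam l j - f1 D r1 dr1 / (1 + D * lam l j).
Proof. unfold f0, f1, sigma_k. pose proof (hDlam j). field. lra. Qed.

Lemma f1_neg : f1 D r1 dr1 < 0.
Proof. unfold f1. apply Rdiv_neg_pos; [exact hdr1 | nra]. Qed.

Lemma f0_sigma_k_pos : 0 < f0 D r1 dr1 (sigma_k l D r1 dr1 j).
Proof.
  rewrite f0_sigma_k. pose proof (lam_nonneg l j). pose proof f1_neg. pose proof (hDlam j).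
  assert (f1 D r1 dr1 / (1 + D * lam l j) < 0) by (apply Rdiv_neg_pos; lra).
  lra.
Qed.

Lemma f0_sigma_k_eigen :
  (f0 D r1 dr1 (sigma_k l D r1 dr1 j) - lam l j) * (/ D + lam l j) + / D * f1 D r1 dr1 = 0.
Proof. rewrite f0_sigma_k. pose proof (hDlam j). field. lra. Qed.

Lemma dr1_of_resonance (n : nat) :
  / D - f0 D r1 dr1 (sigma_k l D r1 dr1 j) + lam l j = - lam l n ->
  dr1 = - r1 * (1 + D * lam l j) * (1 + D * lam l n).
Proof.
  rewrite f0_sigma_k. unfold f1. intros E. pose proof (hDlam j).
  replace dr1 with (dr1 / (D * r1) / (1 + D * lam l j) * (D * r1 * (1 + D * lam l j)))
    by (field; repeat split; lra).
  replace (dr1 / (D * r1) / (1 + D * lam l j)) with (- (/ D + lam l n)) by lra.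
  field. lra.
Qed.

Lemma sigma_k_eq_of_dr1 (n : nat) :
  dr1 = - r1 * (1 + D * lam l j) * (1 + D * lam l n) ->
  sigma_k l D r1 dr1 j = sigma_k l D r1 dr1 n.
Proof.
  intros Hdr. unfold sigma_k. rewrite Hdr. pose proof (hDlam j). pose proof (hDlam n).
  field. lra.
Qed.

Lemma sigma_c_eq_of_dr1 :
  dr1 = - r1 * (1 + D * lam l j) * (1 + D * lam l j) ->
  sigma_k l D r1 dr1 j = sigma_c D r1 dr1.
Proof.
  intros Hdr. pose proof (hDlam j).
  assert (Hsq : sqrt (- dr1) = sqrt r1 * (1 + D * lam l j)).
  { rewrite Hdr. replace (- (- r1 * (1 + D * lam l j) * (1 + D * lam l j)))
      with (r1 * ((1 + D * lam l j) * (1 + D * lam l j))) by ring.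
    rewrite sqrt_mult, sqrt_square by nra. reflexivity. }
  unfold sigma_c. rewrite Hsq.
  replace ((sqrt r1 * (1 + D * lam l j) - sqrt r1) ^ 2)
    with (sqrt r1 * sqrt r1 * (D * lam l j) ^ 2) by ring.
  rewrite sqrt_sqrt by lra.
  unfold sigma_k. rewrite Hdr. field. lra.
Qed.

Lemma f0_sigma_k_nonresonant :
  (forall k, k <> j -> sigma_k l D r1 dr1 j <> sigma_k l D r1 dr1 k) ->
  sigma_k l D r1 dr1 j <> sigma_c D r1 dr1 ->
  forall n, / D - f0 D r1 dr1 (sigma_k l D r1 dr1 j) + lam l j <> - lam l n.
Proof.
  intros Hdist Hc n E. apply dr1_of_resonance in E.
  destruct (Nat.eq_dec n j) as [->|Hnj].
  - exact (Hc (sigma_c_eq_of_dr1 E)).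
  - exact (Hdist n Hnj (sigma_k_eq_of_dr1 n E)).
Qed.

End Spectrum.

Theorem lemma2p2 (l D : R) (r dr : R -> R) (j : nat) :
  0 < l -> 0 < D ->
  (* r in C^2([0,oo)), dr = r' *)
  has_deriv_within Ici0 r dr ->
  (exists ddr, has_deriv_within Ici0 dr ddr /\ cont_within Ici0 ddr) ->
  (forall v, 0 <= v -> 0 < r v) ->
  (forall v, 0 <= v -> dr v < 0) ->
  is_lim r p_infty 0 ->
  (exists ic : nat, (1 <= ic)%nat /\
     (forall i : nat, (1 <= i <= ic)%nat -> 0 < sigma_k l D (r 1) (dr 1) i) /\
     (forall i : nat, (ic < i)%nat -> sigma_k l D (r 1) (dr 1) i <= 0)) ->
  (1 <= j)%nat ->
  lam l j < - (dr 1 + r 1) / (D * r 1) ->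
  (forall k : nat, k <> j -> sigma_k l D (r 1) (dr 1) j <> sigma_k l D (r 1) (dr 1) k) ->
  0 < sigma_k l D (r 1) (dr 1) j < sigma_c D (r 1) (dr 1) ->
  eigval1_alg_mult_one l D (r 1) (dr 1) (sigma_k l D (r 1) (dr 1) j).
Proof.
  intros hl hD _ _ Hr Hdr _ _ hj _ Hdist [_ Hsc].
  assert (hr1 : 0 < r 1) by (apply Hr; lra).
  assert (hdr1 : dr 1 < 0) by (apply Hdr; lra).
  pose proof (f0_sigma_k_pos l D (r 1) (dr 1) j hD hr1 hdr1) as ha.
  pose proof (f0_sigma_k_eigen l D (r 1) (dr 1) j hD hr1) as Hrel.
  pose proof (f1_neg D (r 1) (dr 1) hD hr1 hdr1) as hf1.
  pose proof (f0_sigma_k_nonresonant l D (r 1) (dr 1) j hD hr1 Hdist ltac:(lra)) as Hnr.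
  exists (phi l D j). split; [|split; [|split]].
  - exact (phi_inX l D j hl).
  - exact (phi_neq_0 l D j hl).
  - exact (Mop_phi l D (r 1) (dr 1) _ j hl hD ha Hrel).
  - exact (MmI_iter_eq_0_span l D (r 1) (dr 1) _ j hl hD hj ha ltac:(lra) Hrel Hnr).
Qed.
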